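(* Let $T$ be a tree of order $n$, and let $d_i$ denote the number of dominating sets of $T$ of size $i$. Then $$d_{\gamma(T)}\le d_{\gamma(T)+1}\le\cdots\le d_{\left\lfloor\frac{n+2\gamma(T)+1}{3}\right\rfloor}.$$
   Context: A dominating set of a graph $G=(V,E)$ is a set $S\subseteq V$ such that every vertex is in $S$ or adjacent to a vertex of $S$. $\gamma(T)$ is the minimum size of a dominating set of $T$. *)

From mathcomp Require Import all_boot.
Set Implicit Arguments. Unset Strict Implicit. Unset Printing Implicit Defensive.

Definition simple_graph (T : finType) (e : rel T) : Prop :=
  symmetric e /\ irreflexive e.

Definition num_edges (T : finType) (e : rel T) : nat :=
  #|[set p : T * T | e p.1 p.2]| %/ 2.

Definition is_tree (T : finType) (e : rel T) : Prop :=
  simple_graph e /\ 0 < #|T| /\ (forall x y : T, connect e x y) /\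
  num_edges e = #|T| - 1.

Definition dominating (T : finType) (e : rel T) (S : {set T}) : bool :=
  [forall v, (v \in S) || [exists u in S, e v u]].

Lemma dominating_setT (T : finType) (e : rel T) : dominating e [set: T].
Proof. by apply/forallP => v; rewrite in_setT. Qed.

Lemma exists_dom_size (T : finType) (e : rel T) :
  exists n, [exists S : {set T}, dominating e S && (#|S| == n)].
Proof. exists #|[set: T]|; apply/existsP; exists [set: T].
  by rewrite dominating_setT eqxx. Qed.

Definition domination_number (T : finType) (e : rel T) : nat :=
  ex_minn (exists_dom_size e).

Definition num_dom_sets (T : finType) (e : rel T) (i : nat) : nat :=
  #|[set S : {set T} | dominating e S && (#|S| == i)]|.

From mathcomp Require Import all_boot zify.
Set Implicit Arguments. Unset Strict Implicit. Unset Printing Implicit Defensive.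

(* Double count the inclusions between dominating sets of sizes i and i + 1.
   A dominating i-set has n - i supersets of size i + 1, all dominating.  A
   dominating (i + 1)-set S has at most |R| dominating subsets of size i, where
   R is the set of vertices v of S such that S :\ v still dominates.  In a
   tree, R can be 2-coloured so that deleting either colour class from S leaves
   a dominating set; hence |R| <= 2 (|S| - gamma) = 2 (i + 1 - gamma), which is
   at most n - i exactly when 3 i + 2 <= n + 2 gamma. *)

Lemma double_counting_leq (I J : finType) (A : {set I}) (B : {set J})
    (R : I -> J -> bool) k :
  0 < k ->
  (forall a, a \in A -> k <= #|[set b in B | R a b]|) ->
  (forall b, b \in B -> #|[set a in A | R a b]| <= k) ->
  #|A| <= #|B|.
Proof.
move=> k_gt0 lowA upB; rewrite -(leq_pmul2r k_gt0) -!sum_nat_const.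
have cardE (K : finType) (X : {set K}) (P : pred K) :
    #|[set x in X | P x]| = \sum_(x in X) P x.
  rewrite -sum1dep_card big_mkcondr /=; apply: eq_bigr => x _.
  by case: (P x).
apply: (@leq_trans (\sum_(a in A) #|[set b in B | R a b]|)); first exact: leq_sum.
apply: (@leq_trans (\sum_(b in B) #|[set a in A | R a b]|)); last exact: leq_sum.
under eq_bigr do rewrite cardE.
under [X in _ <= X]eq_bigr do rewrite cardE.
by rewrite exchange_big.
Qed.

Section Domination.
Variables (T : finType) (e : rel T).

Lemma dominatingP (S : {set T}) :
  reflect (forall v, v \in S \/ exists2 u, u \in S & e v u) (dominating e S).
Proof.
apply: (iffP forallP) => domS v.
  case/orP: (domS v) => [|/existsP[u /andP[uS evu]]]; [by left | by right; exists u].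
case: (domS v) => [-> // | [u uS evu]].
by apply/orP; right; apply/existsP; exists u; rewrite uS.
Qed.

Lemma dominatingS (S S' : {set T}) :
  S \subset S' -> dominating e S -> dominating e S'.
Proof.
move=> /subsetP sSS' /dominatingP domS; apply/dominatingP => v.
case: (domS v) => [/sSS' | [u /sSS']]; [by left | by right; exists u].
Qed.

Lemma domination_number_min (S : {set T}) :
  dominating e S -> domination_number e <= #|S|.
Proof.
move=> domS; rewrite /domination_number; case: ex_minnP => m _; apply.
by apply/existsP; exists S; rewrite domS eqxx.
Qed.

Definition removable (S : {set T}) := [set v in S | dominating e (S :\ v)].

Lemma removable_sub (S : {set T}) : removable S \subset S.
Proof. by apply/subsetP => v; rewrite inE => /andP[]. Qed.

Lemma removable_nbr (S : {set T}) v :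
  v \in removable S -> exists2 s, s \in S & e v s.
Proof.
rewrite inE => /andP[_ /dominatingP /(_ v)] [|[s]]; first by rewrite setD11.
by rewrite in_setD1 => /andP[_ sS] evs; exists s.
Qed.

Lemma removable_other_nbr (S : {set T}) v u :
  v \in removable S -> u \notin S -> exists2 s, s \in S :\ v & e u s.
Proof.
rewrite inE => /andP[_ /dominatingP /(_ u)] [|[s sS eus]]; last by exists s.
by rewrite in_setD1 => /andP[_ uS] /negP.
Qed.

Definition dominating_sets i := [set S : {set T} | dominating e S && (#|S| == i)].

Lemma card_dominating_supersets i (S : {set T}) :
  dominating e S -> #|S| = i ->
  #|T| - i <= #|[set S' in dominating_sets i.+1 | S \subset S']|.
Proof.
move=> domS cardS.
have <- : #|[set v |: S | v in ~: S]| = #|T| - i.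
  rewrite card_in_imset; first by rewrite cardsCs setCK cardS.
  move=> v w; rewrite !inE => vS wS vSwS.
  have : v \in w |: S by rewrite -vSwS setU11.
  by rewrite !inE (negbTE vS) orbF => /eqP.
apply/subset_leq_card/subsetP => S' /imsetP[v vS ->]; rewrite inE in vS.
rewrite !inE subsetUr cardsU1 (negPf vS) cardS eqxx !andbT.
exact: dominatingS (subsetUr _ _) domS.
Qed.

Lemma card_dominating_subsets i (S' : {set T}) :
  #|S'| = i.+1 ->
  #|[set S in dominating_sets i | S \subset S']| <= #|removable S'|.
Proof.
move=> cardS'; apply: leq_trans (leq_imset_card (fun v => S' :\ v) _).
apply/subset_leq_card/subsetP => S; rewrite !inE => /andP[/andP[domS /eqP cardS] sSS'].
have [v] : exists v, v \in S' :\: S.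
  by apply/card_gt0P; rewrite cardsD (setIidPr sSS') cardS cardS' subSnn.
rewrite inE => /andP[vS vS'].
have defS : S = S' :\ v.
  have cardS'v : #|S' :\ v| = i by move: (cardsD1 v S'); rewrite vS' cardS' => -[].
  apply/eqP; rewrite eqEcard cardS'v cardS leqnn andbT.
  apply/subsetP => x xS; rewrite in_setD1 (subsetP sSS' x xS) andbT.
  by apply: contraNneq vS => <-.
by apply/imsetP; exists v; rewrite // inE vS' -defS.
Qed.

End Domination.

Section RootedTree.
Variables (T : finType) (e : rel T) (r : T).
Hypotheses (e_sym : symmetric e) (e_irr : irreflexive e).
Hypothesis e_connected : forall x y, connect e x y.

Fixpoint ball k :=
  if k is k'.+1 then ball k' :|: [set y | [exists x in ball k', e x y]] else [set r].

Lemma subset_ball k m : k <= m -> ball k \subset ball m.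
Proof.
move=> /subnK <-; elim: (m - k) => [|j IHj]; first by rewrite add0n.
by rewrite addSn (subset_trans IHj) //= subsetUl.
Qed.

Lemma ball_edge k x y : x \in ball k -> e x y -> y \in ball k.+1.
Proof.
by move=> xk exy; rewrite /= !inE; apply/orP; right; apply/existsP; exists x; rewrite xk.
Qed.

Lemma ball_path k x p : x \in ball k -> path e x p -> last x p \in ball (k + size p).
Proof.
elim: p x k => [|y p IHp] x k /=; first by rewrite addn0.
by move=> xk /andP[exy pp]; rewrite addnS -addSn; apply: IHp pp; apply: ball_edge exy.
Qed.

Lemma mem_some_ball v : exists k, v \in ball k.
Proof.
have /connectP[p pp ->] := e_connected r v.
by exists (0 + size p); apply: ball_path pp; rewrite /= inE.
Qed.

Definition depth v := ex_minn (mem_some_ball v).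

Lemma mem_ball v k : (v \in ball k) = (depth v <= k).
Proof.
rewrite /depth; case: ex_minnP => m vm m_min; apply/idP/idP; first exact: m_min.
by move=> mk; apply: (subsetP (subset_ball mk)).
Qed.

Lemma depth_edge x y : e x y -> depth y <= (depth x).+1.
Proof. by move=> exy; rewrite -mem_ball; apply: ball_edge exy; rewrite mem_ball. Qed.

Lemma depth_eq0 v : (depth v == 0) = (v == r).
Proof. by rewrite -leqn0 -mem_ball inE. Qed.

Lemma exists_lower_nbr v : v != r -> exists u, e v u && (depth u < depth v).
Proof.
rewrite -depth_eq0 => dv; have : v \in ball (depth v) by rewrite mem_ball.
case E: (depth v) dv => [|d] // _; rewrite /= inE => /orP[].
  by rewrite mem_ball E ltnn.
by rewrite inE => /existsP[x /andP[xd exv]]; exists x; rewrite e_sym exv ltnS -mem_ball.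
Qed.

Definition parent v := odflt v [pick u | e v u && (depth u < depth v)].

Lemma parent_spec v : v != r -> e v (parent v) /\ depth (parent v) < depth v.
Proof.
rewrite /parent; case: pickP => [u /andP[] // | no_lower vr].
by have [u] := exists_lower_nbr vr; rewrite no_lower.
Qed.

Lemma depth_parent v : v != r -> depth v = (depth (parent v)).+1.
Proof.
move=> vr; have [ev_par lt_par] := parent_spec vr.
by have := depth_edge ev_par; rewrite e_sym in ev_par; have := depth_edge ev_par; lia.
Qed.

Lemma parent_root : parent r = r.
Proof.
rewrite /parent; case: pickP => [u /andP[_] | //].
by move: (depth_eq0 r); rewrite eqxx => /eqP ->.
Qed.

Definition parent_arcs :=
  [set (v, parent v) | v in [set~ r]] :|: [set (parent v, v) | v in [set~ r]].

Lemma card_parent_arcs : #|parent_arcs| = 2 * #|T|.-1.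
Proof.
have disjoint_arcs :
    [set (v, parent v) | v in [set~ r]] :&: [set (parent v, v) | v in [set~ r]] = set0.
  apply/setP => -[x y]; rewrite !inE; apply/negP.
  case/andP => /imsetP[v vr [-> ->]] /imsetP[w wr [vE wE]]; rewrite !inE in vr wr.
  have := depth_parent vr; have := depth_parent wr; rewrite -vE -wE; lia.
rewrite cardsU disjoint_arcs cards0 subn0.
by rewrite !card_imset ?cardsC1 ?addnn -?mul2n // => v w [].
Qed.

Hypothesis tree_edges : num_edges e = #|T| - 1.

Lemma edge_parent x y : e x y -> (y == parent x) || (x == parent y).
Proof.
move=> exy; apply: contraT; rewrite negb_or => /andP[yNpx xNpy].
pose arcs := [set p : T * T | e p.1 p.2].
have xNy : x != y by apply: contraTneq exy => ->; rewrite e_irr.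
have T_gt0 : 0 < #|T| by apply/card_gt0P; exists r.
have arcs_gt : 2 * #|T| <= #|parent_arcs :|: [set (x, y); (y, x)]|.
  rewrite cardsU card_parent_arcs cards2 xpair_eqE (negbTE xNy) /=.
  suff -> : parent_arcs :&: [set (x, y); (y, x)] = set0 by rewrite cards0; lia.
  apply/setP => -[a b]; rewrite !inE; apply/negP => /andP[].
  case/orP => /imsetP[v _ [-> ->]] /orP[] /eqP[E1 E2];
    by move: yNpx xNpy; rewrite -E1 -E2 eqxx ?orbT.
have : parent_arcs :|: [set (x, y); (y, x)] \subset arcs.
  apply/subsetP => -[a b]; rewrite !inE.
  case/orP => [/orP[] /imsetP[v vr [-> ->]] | /orP[] /eqP[-> ->]] //=.
  - by rewrite !inE in vr; case: (parent_spec vr).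
  - by rewrite !inE in vr; rewrite e_sym; case: (parent_spec vr).
  - by rewrite e_sym.
by move/subset_leq_card; move: tree_edges; rewrite /num_edges -/arcs; lia.
Qed.

Lemma child_of_nbr v s : e v s -> s != parent v -> parent s = v /\ s != r.
Proof.
move=> evs sNpv; move: (edge_parent evs); rewrite (negbTE sNpv) => /eqP vE.
split; first by rewrite vE.
by apply: contraTneq evs => sr; rewrite vE sr parent_root e_irr.
Qed.

Section Colouring.
Variable S : {set T}.
Hypothesis S_dom : dominating e S.
Let R := removable e S.
Let R_sub_S : {subset R <= S} := subsetP (removable_sub e S).
Let S_nbrs_removable v := forall y, e v y -> y \in S -> y \in R.

Definition first_child (X : {set T}) x := [pick c in X | (parent c == x) && (c != r)].

Lemma first_child_some (X : {set T}) x c : c \in X -> parent c = x -> c != r ->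
  exists2 p, first_child X x = Some p & [/\ p \in X, parent p = x & p != r].
Proof.
move=> cX pc cr; rewrite /first_child.
case: pickP => [p /andP[pX /andP[/eqP pp pr]] | none]; first by exists p.
by move: (none c); rewrite cX pc eqxx cr.
Qed.

(* Colours change across the edge from [w] to its parent, except between a
   vertex outside [S] and its first removable child. *)
Definition flip w := (parent w \in S) || (first_child R (parent w) != Some w).

Fixpoint colour_rec k v :=
  if k is k'.+1 then flip v (+) colour_rec k' (parent v) else false.

Definition colour v := colour_rec (depth v) v.

Lemma colour_parent v : v != r -> colour v = flip v (+) colour (parent v).
Proof. by move=> vr; rewrite {1}/colour (depth_parent vr). Qed.

Lemma removable_nbr_colour v : v \in R -> S_nbrs_removable v ->
  exists2 w, e v w & (w \in R) && (colour w != colour v).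
Proof.
move=> vR nbrsR; have [s sS evs] := removable_nbr vR; have sR := nbrsR s evs sS.
have [/andP[vr pR] | vr_or_pNR] := boolP ((v != r) && (parent v \in R)).
  have [ev_par _] := parent_spec vr; exists (parent v) => //.
  rewrite pR (colour_parent vr) /flip (R_sub_S pR).
  by case: colour.
have sNpv : s != parent v.
  apply: contraNneq vr_or_pNR => sE; rewrite -sE sR andbT.
  by apply: contraTneq evs => vr; rewrite sE vr parent_root e_irr.
have [ps sr] := child_of_nbr evs sNpv; exists s => //.
by rewrite sR (colour_parent sr) ps /flip ps (R_sub_S vR); case: colour.
Qed.

Lemma outside_nbrs_colour u : u \notin S -> S_nbrs_removable u ->
  exists w1 w2, [/\ e u w1, e u w2, w1 \in R, w2 \in R & colour w1 != colour w2].
Proof.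
move=> uS nbrsR.
have [w1 w1S euw1] : exists2 w, w \in S & e u w.
  by case: (dominatingP _ _ S_dom u) => // uS'; rewrite uS' in uS.
have w1R := nbrsR _ euw1 w1S.
have [w2] := removable_other_nbr w1R uS; rewrite in_setD1 => /andP[w2Nw1 w2S] euw2.
have w2R := nbrsR _ euw2 w2S.
have other_nbr z : exists w, [/\ e u w, w \in R & w != z].
  by case: (eqVneq w1 z) => [<- | ?]; [exists w2 | exists w1].
have flip_first p : first_child R u = Some p -> parent p = u -> ~~ flip p.
  by move=> pE pp; rewrite /flip pp (negbTE uS) pE eqxx.
have [/andP[ur pR] | ur_or_pNR] := boolP ((u != r) && (parent u \in R)).
  have [w [euw wR wNpu]] := other_nbr (parent u).
  have [pw wr] := child_of_nbr euw wNpu.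
  have [p pE [pR' pp pr]] := first_child_some wR pw wr.
  have [eu_par _] := parent_spec ur.
  exists p, (parent u); split => //; first by rewrite e_sym -pp; case: (parent_spec pr).
  rewrite (colour_parent pr) (negbTE (flip_first p pE pp)) pp (colour_parent ur).
  by rewrite /flip (R_sub_S pR); case: colour.
have nbr_child w : e u w -> w \in R -> parent w = u /\ w != r.
  move=> euw wR; apply: (child_of_nbr euw); apply: contraNneq ur_or_pNR => wE.
  rewrite -wE wR andbT; apply: contraTneq euw => ur.
  by rewrite wE ur parent_root e_irr.
have [pw1 w1r] := nbr_child _ euw1 w1R.
have [p pE [pR pp pr]] := first_child_some w1R pw1 w1r.
have [w [euw wR wNp]] := other_nbr p; have [pw wr] := nbr_child _ euw wR.
exists p, w; split => //; first by rewrite e_sym -pp; case: (parent_spec pr).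
rewrite (colour_parent pr) (colour_parent wr) (negbTE (flip_first p pE pp)) pp pw.
by rewrite /flip pw (negbTE uS) pE (inj_eq Some_inj) (eq_sym p) wNp; case: colour.
Qed.

Definition other_class c := [set x in R | colour x != c].

Lemma dominating_keep_colour c : dominating e (S :\: other_class c).
Proof.
have inD y : y \in S -> (y \notin R) || (colour y == c) -> y \in S :\: other_class c.
  by rewrite !inE => -> yc; rewrite andbT negb_and negbK.
apply/dominatingP => x.
have [/existsP[y /and3P[exy yS yNR]] | noNR] :=
  boolP [exists y, [&& e x y, y \in S & y \notin R]].
  by right; exists y => //; apply: inD; rewrite ?yNR.
have nbrsR : S_nbrs_removable x.
  move=> y exy yS; apply: contraNT noNR => yNR.
  by apply/existsP; exists y; rewrite exy yS.
have [xS | xNS] := boolP (x \in S).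
  have [xR | xNR] := boolP (x \in R); last by left; apply: inD; rewrite ?xNR.
  have [xc | xNc] := eqVneq (colour x) c.
    by left; apply: inD; rewrite ?xc ?eqxx ?orbT.
  have [w exw /andP[wR wx]] := removable_nbr_colour xR nbrsR.
  right; exists w => //; apply: inD; first exact: R_sub_S.
  by move: wx xNc; rewrite orbC; case: (colour w); case: (colour x); case: c.
have [w1 [w2 [exw1 exw2 w1R w2R w12]]] := outside_nbrs_colour xNS nbrsR.
have [w1c | w1Nc] := eqVneq (colour w1) c.
  right; exists w1 => //; apply: inD; first exact: R_sub_S.
  by rewrite w1c eqxx orbT.
right; exists w2 => //; apply: inD; first exact: R_sub_S.
by move: w12 w1Nc; rewrite orbC; case: (colour w1); case: (colour w2); case: c.
Qed.

Lemma card_removable : #|R| <= 2 * (#|S| - domination_number e).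
Proof.
have class_sub c : other_class c \subset S.
  by apply/subsetP => x; rewrite inE => /andP[/R_sub_S].
have gamma_le c : domination_number e <= #|S| - #|other_class c|.
  rewrite -(setIidPr (class_sub c)) -cardsD.
  exact: domination_number_min (dominating_keep_colour c).
have card_classes : #|other_class true| + #|other_class false| = #|R|.
  rewrite -(cardsID [set x | colour x] R) addnC.
  by congr (_ + _); apply: eq_card => x;
    rewrite /other_class !inE; case: colour; rewrite ?andbT ?andbF.
have := gamma_le true; have := gamma_le false.
have := subset_leq_card (class_sub true); have := subset_leq_card (class_sub false).
lia.
Qed.

End Colouring.

End RootedTree.

Theorem theorem3p5 (T : finType) (e : rel T) :
  is_tree e ->
  forall i : nat,
    domination_number e <= i ->
    i < (#|T| + 2 * domination_number e + 1) %/ 3 ->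
    num_dom_sets e i <= num_dom_sets e i.+1.
Proof.
move=> [[e_sym e_irr] [T_gt0 [e_connected tree_edges]]] i _ i_small.
have [r _] := card_gt0P T_gt0.
have gamma_le_n : domination_number e <= #|T|.
  by rewrite -cardsT domination_number_min ?dominating_setT.
apply: (@double_counting_leq _ _ (dominating_sets e i) (dominating_sets e i.+1)
          (fun S S' => S \subset S') (#|T| - i)).
- lia.
- by move=> S; rewrite inE => /andP[S_dom /eqP]; apply: card_dominating_supersets.
- move=> S'; rewrite inE => /andP[S'_dom /eqP S'_card].
  apply: leq_trans (card_dominating_subsets e S'_card) _.
  apply: leq_trans (card_removable r e_sym e_irr e_connected tree_edges S'_dom) _.
  lia.
Qed.
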